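(* Let $G(x,y;\xi)$, $g(x,y)=\mathbb{E}_{\xi\sim\mathcal{P}}G(x,y;\xi)$ be such that there is $\bar l>0$ with, for every $\xi$ and all $x_1,x_2,y_1,y_2$, $\|\nabla_xG(x_1,y_1;\xi)-\nabla_xG(x_2,y_2;\xi)\|\leq\bar l[\|x_1-x_2\|+\|y_1-y_2\|]$ and $\|\nabla_yG(x_1,y_1;\xi)-\nabla_yG(x_2,y_2;\xi)\|\leq\bar l[\|x_1-x_2\|+\|y_1-y_2\|]$. Let $(x_t,y_t,m_t,n_t)$ be generated by the ZO-VRAGDA algorithm described in the context with step sizes $\alpha,\beta>0$. Then for every $t\geq0$, $$\begin{aligned}\mathbb{E}g(x_{t+1},y_{t+1})\geq{}&\mathbb{E}g(x_t,y_t)+\frac\beta2\mathbb{E}\|\nabla_yg(x_{t+1},y_t)\|^2-\frac\alpha2\mathbb{E}\|\nabla_xg(x_t,y_t)\|^2-\frac\beta2\mathbb{E}\|\nabla_yg(x_{t+1},y_t)-n_t\|^2\\&+\frac\alpha2\mathbb{E}\|\nabla_xg(x_t,y_t)-m_t\|^2+\frac\beta2(1-\bar l\beta)\mathbb{E}\|n_t\|^2-\frac\alpha2(1+\alpha\bar l)\mathbb{E}\|m_t\|^2.\end{aligned}$$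
   Context: Zeroth-order estimators: for a sample $\xi$ and a direction $u$ uniform on the unit sphere of $\mathbb{R}^{d_1}$, $\hat\nabla_xG(x,y;\xi)=\frac{G(x+\mu_1u,y;\xi)-G(x,y;\xi)}{\mu_1/d_1}u$; for $\zeta$ and $v$ uniform on the unit sphere of $\mathbb{R}^{d_2}$, $\hat\nabla_yG(x,y;\zeta)=\frac{G(x,y+\mu_2v;\zeta)-G(x,y;\zeta)}{\mu_2/d_2}v$; for a sample set $\mathcal{B}$ of size $r$ (each sample with its own independent direction) $\hat\nabla G(x,y;\mathcal{B})$ is the average of the single-sample estimators. ZO-VRAGDA with parameters $q,B,b\in\mathbb{N}$, $\alpha,\beta,\mu_1,\mu_2>0$, initial $(x_0,y_0)$: for $t=0,1,\dots$: if $t\bmod q=0$, draw $B$ fresh i.i.d. samples $\mathcal{B}_t$ from $\mathcal{P}$ and set $m_t=\hat\nabla_xG(x_t,y_t;\mathcal{B}_t)$; otherwise draw $b$ fresh samples $\mathcal{I}_t$ and set $m_t=\hat\nabla_xG(x_t,y_t;\mathcal{I}_t)-\hat\nabla_xG(x_{t-1},y_{t-1};\mathcal{I}_t)+m_{t-1}$ (same samples and directions in both terms). Set $x_{t+1}=x_t-\alpha m_t$. Then if $t\bmod q=0$, draw $B$ fresh samples $\bar{\mathcal{B}}_t$ and set $n_t=\hat\nabla_yG(x_{t+1},y_t;\bar{\mathcal{B}}_t)$; otherwise draw $b$ fresh samples $\bar{\mathcal{I}}_t$ and set $n_t=\hat\nabla_yG(x_{t+1},y_t;\bar{\mathcal{I}}_t)-\hat\nabla_yG(x_t,y_{t-1};\bar{\mathcal{I}}_t)+n_{t-1}$.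 Set $y_{t+1}=y_t+\beta n_t$. Expectations are over all randomness of the algorithm. *)

From HB Require Import structures.
From mathcomp Require Import all_boot all_order all_algebra.
From mathcomp Require Import all_classical all_reals all_analysis.
Set Implicit Arguments.
Unset Strict Implicit.
Unset Printing Implicit Defensive.
Import Order.TTheory GRing.Theory Num.Theory.
Import numFieldNormedType.Exports.
Local Open Scope classical_set_scope.
Local Open Scope ring_scope.

Section ZO.
Variable R : realType.

Definition dotv n (u v : 'rV[R]_n) : R := \sum_(i < n) u 0 i * v 0 i.
Definition enorm n (v : 'rV[R]_n) : R := Num.sqrt (\sum_(i < n) v 0 i ^+ 2).

Definition grad n (f : 'rV[R]_n -> R) (x : 'rV[R]_n) : 'rV[R]_n :=
  \row_(i < n) derive f x (delta_mx 0 i).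

Definition grad_x d1 d2 (f : 'rV[R]_d1 -> 'rV[R]_d2 -> R) x y :=
  grad (fun x' => f x' y) x.
Definition grad_y d1 d2 (f : 'rV[R]_d1 -> 'rV[R]_d2 -> R) x y :=
  grad (fun y' => f x y') y.

(* coordinates of a row vector as a tuple (tuples carry the product sigma-algebra) *)
Definition rv2t n (v : 'rV[R]_n) : n.-tuple R := [tuple v 0 i | i < n].

(* d-dimensional Lebesgue integral of a nonnegative function, as iterated
   one-dimensional Lebesgue integrals (Tonelli); coordinates are (nat -> R) *)
Fixpoint iter_leb (n : nat) (f : (nat -> R) -> \bar R) : \bar R :=
  if n is k.+1 then
    (\int[@lebesgue_measure R]_s
       iter_leb k (fun v => f (fun i => if i is j.+1 then v j else s)))%E
  else f (fun _ => 0).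

Definition vol n (C : set 'rV[R]_n) : \bar R :=
  iter_leb n (fun v => ((\1_C (\row_(i < n) v (nat_of_ord i)) : R))%:E).

Definition unit_ball n : set 'rV[R]_n := [set z | enorm z <= 1].
Definition unit_sphere n : set 'rV[R]_n := [set z | enorm z = 1].
Definition cone n (A : set 'rV[R]_n) : set 'rV[R]_n :=
  [set z | exists r a, 0 < r <= 1 /\ A a /\ z = r *: a].

Definition rv_measurable n (A : set 'rV[R]_n) : Prop :=
  measurable [set t : n.-tuple R | A (\row_(i < n) tnth t i)].

Section Prob.
Variables (dO : measure_display) (Omega : measurableType dO)
  (P : probability Omega R).

(* u is uniformly distributed on the unit sphere of R^n: its law is the
   normalized surface measure sigma(A) = vol(cone A) / vol(unit ball) *)
Definition unif_sphere n (u : Omega -> 'rV[R]_n) : Prop :=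
  measurable_fun setT (fun w => rv2t (u w)) /\
  forall A : set 'rV[R]_n, rv_measurable A -> A `<=` @unit_sphere n ->
    P (u @^-1` A) = (fine (vol (cone A)) / fine (vol (@unit_ball n)))%:E.

Definition has_law (dX : measure_display) (X : measurableType dX)
  (Q : probability X R) (xi : Omega -> X) : Prop :=
  measurable_fun setT xi /\
  forall A : set X, measurable A -> P (xi @^-1` A) = Q A.

Definition mutually_independent (K : eqType) (F : K -> set (set Omega)) : Prop :=
  forall (J : seq K) (E : K -> set Omega), uniq J ->
    (forall j, j \in J -> F j (E j)) ->
    P (\big[setI/setT]_(j <- J) E j) = (\prod_(j <- J) P (E j))%E.

Definition sigma_rv (dX : measure_display) (X : measurableType dX)
  (xi : Omega -> X) : set (set Omega) :=
  [set E | exists2 A, measurable A & E = xi @^-1` A].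
Definition sigma_rvec n (u : Omega -> 'rV[R]_n) : set (set Omega) :=
  sigma_rv (fun w => rv2t (u w)).

Definition expect (X : Omega -> R) : R := Rintegral P setT X.
Definition rv_integrable (X : Omega -> R) : Prop :=
  P.-integrable setT (fun w => (X w)%:E).
End Prob.

Section Algo.
Variables (dX : measure_display) (X : measurableType dX).
Variables (d1 d2 : nat) (G : 'rV[R]_d1 -> 'rV[R]_d2 -> X -> R).
Variables (q B b : nat) (alpha beta mu1 mu2 : R) (x0 : 'rV[R]_d1) (y0 : 'rV[R]_d2).

Definition zo_x (x : 'rV[R]_d1) (y : 'rV[R]_d2) (xi : X) (u : 'rV[R]_d1) :=
  ((G (x + mu1 *: u) y xi - G x y xi) / (mu1 / d1%:R)) *: u.
Definition zo_y (x : 'rV[R]_d1) (y : 'rV[R]_d2) (zeta : X) (v : 'rV[R]_d2) :=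
  ((G x (y + mu2 *: v) zeta - G x y zeta) / (mu2 / d2%:R)) *: v.

(* samples: xs t i (with directions us t i) are the i-th samples drawn for the
   x-update at iteration t; zs t i (with directions vs t i) for the y-update *)
Variables (xs zs : nat -> nat -> X) (us : nat -> nat -> 'rV[R]_d1)
  (vs : nat -> nat -> 'rV[R]_d2).

Definition est_x (r t : nat) x y : 'rV[R]_d1 :=
  (r%:R)^-1 *: \sum_(i < r) zo_x x y (xs t i) (us t i).
Definition est_y (r t : nat) x y : 'rV[R]_d2 :=
  (r%:R)^-1 *: \sum_(i < r) zo_y x y (zs t i) (vs t i).

(* zo_iter t = (x_{t+1}, y_{t+1}, x_t, y_t, m_t, n_t) *)
Fixpoint zo_iter (t : nat) :
  'rV[R]_d1 * 'rV[R]_d2 * 'rV[R]_d1 * 'rV[R]_d2 * 'rV[R]_d1 * 'rV[R]_d2 :=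
  match t with
  | 0 =>
      let m := est_x B 0 x0 y0 in
      let x1 := x0 - alpha *: m in
      let n := est_y B 0 x1 y0 in
      let y1 := y0 + beta *: n in
      (x1, y1, x0, y0, m, n)
  | k.+1 =>
      let: (xc, yc, xp, yp, mp, np) := zo_iter k in
      let m := if (k.+1 %% q == 0)%N then est_x B k.+1 xc yc
               else est_x b k.+1 xc yc - est_x b k.+1 xp yp + mp in
      let xn := xc - alpha *: m in
      let n := if (k.+1 %% q == 0)%N then est_y B k.+1 xn yc
               else est_y b k.+1 xn yc - est_y b k.+1 xc yp + np in
      let yn := yc + beta *: n in
      (xn, yn, xc, yc, m, n)
  end.

End Algo.

Definition mean_obj (dX : measure_display) (X : measurableType dX)
  (Q : probability X R) d1 d2 (G : 'rV[R]_d1 -> 'rV[R]_d2 -> X -> R) x y : R :=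
  Rintegral Q setT (G x y).

(* index type of all random draws of the algorithm:
   inl (inl (t,i)) : sample xi for the x-update at iteration t, number i
   inl (inr (t,i)) : its direction u
   inr (inl (t,i)) : sample zeta for the y-update at iteration t, number i
   inr (inr (t,i)) : its direction v *)
Definition draw_idx : eqType := (((nat * nat) + (nat * nat)) + ((nat * nat) + (nat * nat)))%type.

Definition draw_sigma (dO : measure_display) (Omega : measurableType dO)
  (dX : measure_display) (X : measurableType dX) d1 d2
  (xs zs : nat -> nat -> Omega -> X) (us : nat -> nat -> Omega -> 'rV[R]_d1)
  (vs : nat -> nat -> Omega -> 'rV[R]_d2) (k : draw_idx) : set (set Omega) :=
  match k with
  | inl (inl (t, i)) => sigma_rv (xs t i)
  | inl (inr (t, i)) => sigma_rvec (us t i)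
  | inr (inl (t, i)) => sigma_rv (zs t i)
  | inr (inr (t, i)) => sigma_rvec (vs t i)
  end.

Section Random.
Variables (dO : measure_display) (Omega : measurableType dO).
Variables (dX : measure_display) (X : measurableType dX).
Variables (d1 d2 : nat) (G : 'rV[R]_d1 -> 'rV[R]_d2 -> X -> R).
Variables (q B b : nat) (alpha beta mu1 mu2 : R) (x0 : 'rV[R]_d1) (y0 : 'rV[R]_d2).
Variables (xs zs : nat -> nat -> Omega -> X) (us : nat -> nat -> Omega -> 'rV[R]_d1)
  (vs : nat -> nat -> Omega -> 'rV[R]_d2).
Let run w := zo_iter G q B b alpha beta mu1 mu2 x0 y0
  (fun t i => xs t i w) (fun t i => zs t i w) (fun t i => us t i w) (fun t i => vs t i w).
Definition X_rv (t : nat) (w : Omega) : 'rV[R]_d1 :=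
  if t is k.+1 then (run w k).1.1.1.1.1 else x0.
Definition Y_rv (t : nat) (w : Omega) : 'rV[R]_d2 :=
  if t is k.+1 then (run w k).1.1.1.1.2 else y0.
Definition M_rv (t : nat) (w : Omega) : 'rV[R]_d1 := (run w t).1.2.
Definition N_rv (t : nat) (w : Omega) : 'rV[R]_d2 := (run w t).2.
End Random.

End ZO.

From HB Require Import structures.
From mathcomp Require Import all_boot all_order all_algebra.
From mathcomp Require Import all_classical all_reals all_analysis.
From mathcomp Require Import ring lra.
Import Order.TTheory GRing.Theory Num.Theory.
Import numFieldNormedType.Exports.
Local Open Scope classical_set_scope.
Local Open Scope ring_scope.

Set Implicit Arguments.
Unset Strict Implicit.
Unset Printing Implicit Defensive.

(** Along each coordinate block every sample G(., y; xi) and G(x, .; xi) has an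
    lbar-Lipschitz gradient, so its first-order Taylor remainder is at most
    lbar/2 |h|^2.  That bound is uniform in the sample, hence it also justifies
    differentiating under the expectation, and the mean objective g inherits it.
    Applying it to the descent step x_{t+1} = x_t - alpha m_t and to the ascent
    step y_{t+1} = y_t + beta n_t, and expanding the inner products with
    2 <a, m> = |a|^2 + |m|^2 - |a - m|^2, gives the inequality for every outcome;
    taking expectations concludes. *)

Section EuclideanRowVectors.
Variables (R : realType) (n : nat).
Implicit Types (u v w : 'rV[R]_n) (s : R).

Lemma enorm_ge0 v : 0 <= enorm v.
Proof. exact: sqrtr_ge0. Qed.

Lemma enorm0 : enorm (0 : 'rV[R]_n) = 0.
Proof. by rewrite /enorm big1 ?sqrtr0 // => i _; rewrite mxE expr0n. Qed.

Lemma enorm_sqr v : enorm v ^+ 2 = dotv v v.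
Proof.
rewrite sqr_sqrtr; last by apply: sumr_ge0 => i _; exact: sqr_ge0.
by apply: eq_bigr => i _; rewrite expr2.
Qed.

Lemma dotvBl u v w : dotv (u - v) w = dotv u w - dotv v w.
Proof. by rewrite /dotv -sumrB; apply: eq_bigr => i _; rewrite !mxE mulrBl. Qed.

Lemma dotvZr s u v : dotv u (s *: v) = s * dotv u v.
Proof. by rewrite /dotv mulr_sumr; apply: eq_bigr => i _; rewrite !mxE mulrCA. Qed.

Lemma dotv_delta v i : dotv v (delta_mx 0 i) = v 0 i.
Proof.
rewrite /dotv (bigD1 i) //= big1 => [|j /negbTE ji]; rewrite mxE /=.
  by rewrite eqxx mulr1 addr0.
by rewrite ji mulr0.
Qed.

Lemma enormZ s v : enorm (s *: v) = `|s| * enorm v.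
Proof.
rewrite /enorm -sqrtr_sqr -sqrtrM ?sqr_ge0 // mulr_sumr.
by congr Num.sqrt; apply: eq_bigr => i _; rewrite mxE exprMn.
Qed.

Lemma enorm_delta i : enorm (delta_mx 0 i : 'rV[R]_n) = 1.
Proof.
by rewrite -(ger0_norm (enorm_ge0 _)) -sqrtr_sqr enorm_sqr dotv_delta mxE !eqxx sqrtr1.
Qed.

Lemma enormB_sqr u v :
  enorm (u - v) ^+ 2 = enorm u ^+ 2 - 2 * dotv u v + enorm v ^+ 2.
Proof.
rewrite !enorm_sqr /dotv mulr_sumr -sumrB -big_split /=.
by apply: eq_bigr => i _; rewrite !mxE; ring.
Qed.

Lemma dotv_lagrange u v :
  2 * (dotv u u * dotv v v - dotv u v ^+ 2) =
  \sum_i \sum_j (u 0 i * v 0 j - u 0 j * v 0 i) ^+ 2.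
Proof.
pose a i j := u 0 i * u 0 i * (v 0 j * v 0 j).
pose b i j := u 0 i * v 0 i * (u 0 j * v 0 j).
have a_sym : \sum_i \sum_j a j i = \sum_i \sum_j a i j by rewrite exchange_big.
have -> : \sum_i \sum_j (u 0 i * v 0 j - u 0 j * v 0 i) ^+ 2 =
    \sum_i \sum_j a i j + \sum_i \sum_j a j i - 2 * \sum_i \sum_j b i j.
  rewrite mulr_sumr -big_split -sumrB; apply: eq_bigr => i _.
  rewrite mulr_sumr -big_split -sumrB; apply: eq_bigr => j _.
  rewrite /a /b /=; ring.
by rewrite a_sym /a /b /dotv expr2 !big_distrlr /=; ring.
Qed.

Lemma normr_dotv_le u v : `|dotv u v| <= enorm u * enorm v.
Proof.
rewrite -(@ler_pXn2r _ 2) ?nnegrE ?mulr_ge0 ?enorm_ge0 //.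
rewrite real_normK ?num_real // exprMn !enorm_sqr -subr_ge0 -(@pmulr_rge0 _ 2) //.
by rewrite dotv_lagrange; do 2!apply: sumr_ge0 => ? _; exact: sqr_ge0.
Qed.
End EuclideanRowVectors.

Section FirstOrderTaylor.
Variable R : realType.
Implicit Types (p dp : R -> R) (k : R).

Lemma taylor1_lower p dp k :
  (forall s, is_derive s (1 : R) p (dp s)) ->
  (forall s, 0 < s < 1 -> dp 0 - k * s <= dp s) ->
  p 0 + dp 0 - k / 2 <= p 1.
Proof.
move=> p_dp dp_ge.
pose psi := p - dp 0 \*: id + (k / 2) \*: (@id R * id).
have psi_dp (s : R) :
    is_derive s (1 : R) psi (dp s - dp 0 *: 1 + (k / 2) *: (s *: 1 + s *: 1)).
  exact: is_deriveD.
have : psi 0 <= psi 1.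
  apply: (@ger0_derive1_ndecr _ psi 0 1) => //.
  - move=> s; rewrite in_itv /= => s01; rewrite derive1E derive_val.
    have := dp_ge s s01; rewrite !scaler1 -[_ *: (s + s)]/(k / 2 * (s + s)); lra.
  - apply: continuous_subspaceT => s; apply: differentiable_continuous.
    by apply/derivable1_diffP; case: (psi_dp s).
rewrite /psi !fctE /= !mul0r mulr1 !scaler0.
rewrite -[_%:A]/(dp 0 * 1) -[(k / 2)%:A]/(k / 2 * 1); lra.
Qed.

Lemma taylor1_remainder p dp k :
  (forall s, is_derive s (1 : R) p (dp s)) ->
  (forall s, 0 < s < 1 -> `|dp s - dp 0| <= k * s) ->
  `|p 1 - p 0 - dp 0| <= k / 2.
Proof.
move=> p_dp dp_near; rewrite ler_norml; apply/andP; split.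
  suff : p 0 + dp 0 - k / 2 <= p 1 by lra.
  apply: taylor1_lower => // s /dp_near; rewrite ler_norml; lra.
suff : - p 0 + - dp 0 - k / 2 <= - p 1 by lra.
apply: (@taylor1_lower (- p) (fun s => - dp s)) => s /dp_near.
rewrite ler_norml; lra.
Qed.
End FirstOrderTaylor.

Section LipschitzGradient.
Variables (R : realType) (n : nat).
Implicit Types (f : 'rV[R]_n -> R) (x z h : 'rV[R]_n).

Definition quad_remainder_bound f (c : R) :=
  forall x h, `|f (x + h) - f x - dotv (grad f x) h| <= c * enorm h ^+ 2.

Lemma dotv_grad f z h : differentiable f z -> dotv (grad f z) h = 'd f z h.
Proof.
move=> df; rewrite {2}(row_sum_delta h) linear_sum /dotv; apply: eq_bigr => i _.
by rewrite linearZ /= /grad mxE deriveE // mulrC.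
Qed.

Lemma is_derive_along f x h s : differentiable f (x + s *: h) ->
  is_derive s (1 : R) (fun s => f (x + s *: h)) ('d f (x + s *: h) h).
Proof.
move=> df; have dfh : derivable f (x + s *: h) h by exact: diff_derivable.
have quot_eq :
    (fun t : R => t^-1 *: ((fun s => f (x + s *: h)) (t *: 1 + s) - f (x + s *: h)))
    = (fun t : R => t^-1 *: (f (t *: h + (x + s *: h)) - f (x + s *: h))).
  by apply/funext => t; rewrite scaler1 scalerDl addrCA addrC.
apply: DeriveDef; rewrite /derivable /derive /= quot_eq //.
by rewrite -/(derive _ _ _) deriveE.
Qed.

Lemma lipschitz_grad_remainder f (L : R) :
  (forall z, differentiable f z) ->
  (forall z w, enorm (grad f z - grad f w) <= L * enorm (z - w)) ->
  quad_remainder_bound f (L / 2).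
Proof.
move=> df Lf x h.
pose dp s := dotv (grad f (x + s *: h)) h.
have p_dp s : is_derive s (1 : R) (fun s => f (x + s *: h)) (dp s).
  by rewrite /dp dotv_grad //; exact: is_derive_along.
have dp_near s : 0 < s < 1 -> `|dp s - dp 0| <= L * enorm h ^+ 2 * s.
  case/andP=> s_gt0 _; rewrite /dp -dotvBl (le_trans (normr_dotv_le _ _)) //.
  rewrite scale0r addr0 mulrAC expr2 mulrA; apply: ler_wpM2r; first exact: enorm_ge0.
  by have := Lf (x + s *: h) x; rewrite addrAC subrr add0r enormZ gtr0_norm // mulrA.
have := taylor1_remainder p_dp dp_near.
by rewrite /dp scale1r scale0r addr0 mulrAC.
Qed.
End LipschitzGradient.

Section Expectation.
Context d (T : measurableType d) (R : realType) (P : probability T R).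
Implicit Types (f g : T -> R) (k : R).

Lemma rv_integrable_measurable f : rv_integrable P f -> measurable_fun setT f.
Proof. by move=> /(measurable_int P) /measurable_realfun.measurable_EFinP. Qed.

Lemma rv_integrable_cst k : rv_integrable P (fun=> k).
Proof. exact: finite_measure_integrable_cst. Qed.

Lemma rv_integrableD f g :
  rv_integrable P f -> rv_integrable P g -> rv_integrable P (fun w => f w + g w).
Proof. by move=> If Ig; apply: eq_integrable (integrableD _ If Ig) => // w _. Qed.

Lemma rv_integrableB f g :
  rv_integrable P f -> rv_integrable P g -> rv_integrable P (fun w => f w - g w).
Proof. by move=> If Ig; apply: eq_integrable (integrableB _ If Ig) => // w _. Qed.

Lemma rv_integrableZl k f : rv_integrable P f -> rv_integrable P (fun w => k * f w).
Proof. by move=> If; apply: eq_integrable (integrableZl _ k If) => // w _. Qed.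

Lemma rv_integrableZr k f : rv_integrable P f -> rv_integrable P (fun w => f w * k).
Proof.
by move=> If; apply: eq_integrable (rv_integrableZl k If) => // w _; rewrite mulrC.
Qed.

Lemma rv_integrable_sum n (F : 'I_n -> T -> R) :
  (forall i, rv_integrable P (F i)) -> rv_integrable P (fun w => \sum_(i < n) F i w).
Proof.
move=> IF.
have := integrable_sum measurableT (index_enum 'I_n) (P := xpredT) (fun i _ => IF i).
by apply: eq_integrable => // w _; rewrite /= sumEFin.
Qed.

Lemma expect_cst k : expect P (fun=> k) = k.
Proof. by rewrite /expect Rintegral_cst // (congr1 fine (probability_setT P)) mulr1. Qed.

Lemma expectD f g : rv_integrable P f -> rv_integrable P g ->
  expect P (fun w => f w + g w) = expect P f + expect P g.
Proof. exact: RintegralD. Qed.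

Lemma expectB f g : rv_integrable P f -> rv_integrable P g ->
  expect P (fun w => f w - g w) = expect P f - expect P g.
Proof. exact: RintegralB. Qed.

Lemma expectZl k f : rv_integrable P f -> expect P (fun w => k * f w) = k * expect P f.
Proof. exact: RintegralZl. Qed.

Lemma expectZr k f : rv_integrable P f -> expect P (fun w => f w * k) = expect P f * k.
Proof. exact: RintegralZr. Qed.

Lemma expect_sum n (F : 'I_n -> T -> R) : (forall i, rv_integrable P (F i)) ->
  expect P (fun w => \sum_(i < n) F i w) = \sum_(i < n) expect P (F i).
Proof.
elim: n F => [|n IHn] F IF.
  rewrite big_ord0 -[RHS](expect_cst 0); congr (expect P _).
  by apply/funext => w; rewrite big_ord0.
rewrite big_ord_recr /= -IHn // -expectD //; last exact: rv_integrable_sum.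
by congr (expect P _); apply/funext => w; rewrite big_ord_recr.
Qed.

Lemma le_expect f g : rv_integrable P f -> rv_integrable P g ->
  (forall w, f w <= g w) -> expect P f <= expect P g.
Proof. by move=> If Ig fg; apply: le_Rintegral => // w _. Qed.

Lemma normr_expect_le f k : rv_integrable P f -> (forall w, `|f w| <= k) ->
  `|expect P f| <= k.
Proof.
move=> If fk; rewrite -(expect_cst k) (le_trans (le_normr_Rintegral _ _)) //.
apply: le_expect => //; last exact: rv_integrable_cst.
exact: integrable_norm.
Qed.
End Expectation.

Lemma cvg_at_rate (R : realType) T (F : set_system T) (FF : Filter F)
    (u e : T -> R) (a c : R) :
  e @ F --> 0 -> (\forall t \near F, `|u t - a| <= c * `|e t|) -> u @ F --> a.
Proof.
move=> e0 ue; apply/subr_cvg0/norm_cvg0P.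
apply: (@squeeze_cvgr _ _ _ _ (fun=> 0) (fun t => c * `|e t|)).
- by apply: filterS ue => t ->; rewrite normr_ge0.
- exact: cvg_cst.
- have := cvgM (cvg_cst c) (cvg_norm e0); rewrite normr0 mulr0; exact.
Qed.

Section ExpectedRemainder.
Context d (T : measurableType d) (R : realType) (Q : probability T R).
Variables (n : nat) (F : 'rV[R]_n -> T -> R) (c : R).
Hypothesis F_integrable : forall x, rv_integrable Q (F x).
Hypothesis F_remainder : forall w, quad_remainder_bound (F^~ w) c.

Let g x := expect Q (F x).

(* The remainder bound makes the difference quotients converge to the partial
   derivatives at rate c |s|, uniformly in the sample; this gives their
   measurability, their integrability and differentiation under Q at once. *)
Section AtPoint.
Variable x : 'rV[R]_n.
Let partial i w : R := grad (F^~ w) x 0 i.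
Let diffquot (i : 'I_n) (s : R) w := s^-1 * (F (x + s *: delta_mx 0 i) w - F x w).

Lemma diffquot_partial_le i s w : s != 0 -> `|diffquot i s w - partial i w| <= c * `|s|.
Proof.
move=> s0; have := F_remainder w x (s *: delta_mx 0 i).
rewrite dotvZr dotv_delta enormZ enorm_delta mulr1 => rem.
have -> : diffquot i s w - partial i w
    = s^-1 * (F (x + s *: delta_mx 0 i) w - F x w - s * partial i w).
  by rewrite /diffquot; field.
rewrite normrM normfV ler_pdivrMl ?normr_gt0 // (le_trans rem) //.
by rewrite expr2 mulrCA.
Qed.

Lemma diffquot_integrable i s : rv_integrable Q (diffquot i s).
Proof. by apply: rv_integrableZl; apply: rv_integrableB. Qed.

Lemma partial_measurable i : measurable_fun setT (partial i).
Proof.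
apply: (measurable_realfun.measurable_fun_cvg (h := fun m => diffquot i m.+1%:R^-1)).
  by move=> m; apply: rv_integrable_measurable; exact: diffquot_integrable.
move=> w _; apply: (@cvg_at_rate R nat \oo _ _ harmonic _ c); first exact: cvg_harmonic.
by apply: filterE => m; apply: diffquot_partial_le; rewrite invr_neq0.
Qed.

Lemma partial_integrable i : rv_integrable Q (partial i).
Proof.
apply: (le_integrable measurableT (g := EFin \o (fun w => `|diffquot i 1 w| + c))).
- exact/measurable_realfun.measurable_EFinP/partial_measurable.
- move=> w _; rewrite /= lee_fin (le_trans _ (ler_norm _)) //.
  have := ler_distD (diffquot i 1 w) (partial i w) 0; rewrite !subr0 distrC => tri.
  rewrite (le_trans tri) // addrC lerD2l.
  by have := diffquot_partial_le i w (oner_neq0 R); rewrite normr1 mulr1.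
- apply: rv_integrableD; last exact: rv_integrable_cst.
  exact: integrable_norm (diffquot_integrable i 1).
Qed.

Lemma derive_expect i : derive g x (delta_mx 0 i) = expect Q (partial i).
Proof.
apply: cvg_lim => //; apply: (@cvg_at_rate R R 0^' _ _ id _ c).
  exact: cvg_within.
near=> t.
have t0 : t != 0 by near: t; exact: nbhs_dnbhs_neq.
have -> : t^-1 *: (g (t *: delta_mx 0 i + x) - g x) - expect Q (partial i)
    = expect Q (fun w => diffquot i t w - partial i w).
  rewrite expectB; [|exact: diffquot_integrable|exact: partial_integrable].
  rewrite /diffquot expectZl ?expectB //; last exact: rv_integrableB.
  by rewrite /g [t *: _ + x]addrC.
apply: normr_expect_le => [|w]; last exact: diffquot_partial_le.
by apply: rv_integrableB; [exact: diffquot_integrable | exact: partial_integrable].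
Unshelve. all: end_near.
Qed.

Lemma dotv_grad_integrable h : rv_integrable Q (fun w => dotv (grad (F^~ w) x) h).
Proof.
by apply: rv_integrable_sum => i; apply: rv_integrableZr; exact: partial_integrable.
Qed.

Lemma dotv_grad_expect h :
  dotv (grad g x) h = expect Q (fun w => dotv (grad (F^~ w) x) h).
Proof.
rewrite /dotv expect_sum => [|i]; last first.
  by apply: rv_integrableZr; exact: partial_integrable.
apply: eq_bigr => i _.
by rewrite expectZr; [rewrite mxE derive_expect | exact: partial_integrable].
Qed.
End AtPoint.

Lemma quad_remainder_bound_expect : quad_remainder_bound g c.
Proof.
move=> x h; rewrite dotv_grad_expect /g -expectB // -expectB.
- apply: normr_expect_le => [|w]; last exact: F_remainder.
  by apply: rv_integrableB; [exact: rv_integrableB | exact: dotv_grad_integrable].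
- exact: rv_integrableB.
- exact: dotv_grad_integrable.
Qed.
End ExpectedRemainder.

Section AscentDescentStep.
Variables (R : realType) (d1 d2 : nat) (f : 'rV[R]_d1 -> 'rV[R]_d2 -> R) (L : R).
Hypothesis f_remainder_x : forall y, quad_remainder_bound (f^~ y) (L / 2).
Hypothesis f_remainder_y : forall x, quad_remainder_bound (f x) (L / 2).

Lemma gda_step_ge (alpha beta : R) x y m v :
  f x y + beta / 2 * enorm (grad_y f (x - alpha *: m) y) ^+ 2
    - alpha / 2 * enorm (grad_x f x y) ^+ 2
    - beta / 2 * enorm (grad_y f (x - alpha *: m) y - v) ^+ 2
    + alpha / 2 * enorm (grad_x f x y - m) ^+ 2
    + beta / 2 * (1 - L * beta) * enorm v ^+ 2
    - alpha / 2 * (1 + alpha * L) * enorm m ^+ 2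
  <= f (x - alpha *: m) (y + beta *: v).
Proof.
have := f_remainder_x y x (- alpha *: m).
have := f_remainder_y (x - alpha *: m) y (beta *: v).
rewrite !dotvZr !enormZ !exprMn !real_normK ?num_real // scaleNr !enormB_sqr.
rewrite /grad_x /grad_y !ler_norml => /andP[lo_y _] /andP[lo_x _].
nra.
Qed.
End AscentDescentStep.

Section MeanObjective.
Context (R : realType) (dX : measure_display) (X : measurableType dX).
Variables (Pxi : probability X R) (d1 d2 : nat) (G : 'rV[R]_d1 -> 'rV[R]_d2 -> X -> R).
Variable lbar : R.
Hypothesis G_integrable : forall x y, Pxi.-integrable setT (fun z => (G x y z)%:E).
Hypothesis G_diff_x : forall x y z, differentiable (fun x' => G x' y z) x.
Hypothesis G_diff_y : forall x y z, differentiable (fun y' => G x y' z) y.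
Hypothesis G_lip_x : forall z x1 x2 y1 y2,
  enorm (grad_x (fun x y => G x y z) x1 y1 - grad_x (fun x y => G x y z) x2 y2)
    <= lbar * (enorm (x1 - x2) + enorm (y1 - y2)).
Hypothesis G_lip_y : forall z x1 x2 y1 y2,
  enorm (grad_y (fun x y => G x y z) x1 y1 - grad_y (fun x y => G x y z) x2 y2)
    <= lbar * (enorm (x1 - x2) + enorm (y1 - y2)).

Lemma mean_obj_remainder_x y :
  quad_remainder_bound (fun x => mean_obj Pxi G x y) (lbar / 2).
Proof.
apply: (quad_remainder_bound_expect (F := fun x => G x y)) => [x|w].
  exact: G_integrable.
apply: lipschitz_grad_remainder => // x1 x2.
by have := G_lip_x w x1 x2 y y; rewrite subrr enorm0 addr0.
Qed.

Lemma mean_obj_remainder_y x :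
  quad_remainder_bound (mean_obj Pxi G x) (lbar / 2).
Proof.
apply: (quad_remainder_bound_expect (F := G x)) => [y|w].
  exact: G_integrable.
apply: lipschitz_grad_remainder => // y1 y2.
by have := G_lip_y w x x y1 y2; rewrite subrr enorm0 add0r.
Qed.
End MeanObjective.

Section Iterates.
Context (R : realType) (dO : measure_display) (Omega : measurableType dO).
Context (dX : measure_display) (X : measurableType dX).
Variables (d1 d2 : nat) (G : 'rV[R]_d1 -> 'rV[R]_d2 -> X -> R).
Variables (q B b : nat) (alpha beta mu1 mu2 : R) (x0 : 'rV[R]_d1) (y0 : 'rV[R]_d2).
Variables (xs zs : nat -> nat -> Omega -> X).
Variables (us : nat -> nat -> Omega -> 'rV[R]_d1) (vs : nat -> nat -> Omega -> 'rV[R]_d2).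

Local Notation xr := (X_rv G q B b alpha beta mu1 mu2 x0 y0 xs zs us vs).
Local Notation yr := (Y_rv G q B b alpha beta mu1 mu2 x0 y0 xs zs us vs).
Local Notation mr := (M_rv G q B b alpha beta mu1 mu2 x0 y0 xs zs us vs).
Local Notation nr := (N_rv G q B b alpha beta mu1 mu2 x0 y0 xs zs us vs).

Lemma X_rvS t w : xr t.+1 w = xr t w - alpha *: mr t w.
Proof.
rewrite /X_rv /M_rv; case: t => [|t] //=.
by case: (zo_iter _ _ _ _ _ _ _ _ _ _ _ _ _ _ t) => [[[[[? ?] ?] ?] ?] ?].
Qed.

Lemma Y_rvS t w : yr t.+1 w = yr t w + beta *: nr t w.
Proof.
rewrite /Y_rv /N_rv; case: t => [|t] //=.
by case: (zo_iter _ _ _ _ _ _ _ _ _ _ _ _ _ _ t) => [[[[[? ?] ?] ?] ?] ?].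
Qed.
End Iterates.

Theorem lemma6
  (R : realType)
  (dO : measure_display) (Omega : measurableType dO) (P : probability Omega R)
  (dX : measure_display) (X : measurableType dX) (Pxi : probability X R)
  (d1 d2 : nat) (G : 'rV[R]_d1 -> 'rV[R]_d2 -> X -> R) (lbar : R)
  (hl : 0 < lbar)
  (hGint : forall x y, Pxi.-integrable setT (fun z => (G x y z)%:E))
  (hdx : forall x y z, differentiable (fun x' => G x' y z) x)
  (hdy : forall x y z, differentiable (fun y' => G x y' z) y)
  (hLx : forall z x1 x2 y1 y2,
     enorm (grad_x (fun x y => G x y z) x1 y1 - grad_x (fun x y => G x y z) x2 y2)
       <= lbar * (enorm (x1 - x2) + enorm (y1 - y2)))
  (hLy : forall z x1 x2 y1 y2,
     enorm (grad_y (fun x y => G x y z) x1 y1 - grad_y (fun x y => G x y z) x2 y2)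
       <= lbar * (enorm (x1 - x2) + enorm (y1 - y2)))
  (q B b : nat) (hq : (0 < q)%N) (hB : (0 < B)%N) (hb : (0 < b)%N)
  (alpha beta mu1 mu2 : R)
  (ha : 0 < alpha) (hbeta : 0 < beta) (hmu1 : 0 < mu1) (hmu2 : 0 < mu2)
  (x0 : 'rV[R]_d1) (y0 : 'rV[R]_d2)
  (xs zs : nat -> nat -> Omega -> X)
  (us : nat -> nat -> Omega -> 'rV[R]_d1) (vs : nat -> nat -> Omega -> 'rV[R]_d2)
  (hxs : forall t i, has_law P Pxi (xs t i))
  (hzs : forall t i, has_law P Pxi (zs t i))
  (hus : forall t i, unif_sphere P (us t i))
  (hvs : forall t i, unif_sphere P (vs t i))
  (hind : mutually_independent P (draw_sigma xs zs us vs))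
  (t : nat) :
  let g := mean_obj Pxi G in
  let xr := X_rv G q B b alpha beta mu1 mu2 x0 y0 xs zs us vs in
  let yr := Y_rv G q B b alpha beta mu1 mu2 x0 y0 xs zs us vs in
  let mr := M_rv G q B b alpha beta mu1 mu2 x0 y0 xs zs us vs in
  let nr := N_rv G q B b alpha beta mu1 mu2 x0 y0 xs zs us vs in
  let g_t := fun w => g (xr t w) (yr t w) in
  let g_t1 := fun w => g (xr t.+1 w) (yr t.+1 w) in
  let gy2 := fun w => enorm (grad_y g (xr t.+1 w) (yr t w)) ^+ 2 in
  let gx2 := fun w => enorm (grad_x g (xr t w) (yr t w)) ^+ 2 in
  let ey2 := fun w => enorm (grad_y g (xr t.+1 w) (yr t w) - nr t w) ^+ 2 in
  let ex2 := fun w => enorm (grad_x g (xr t w) (yr t w) - mr t w) ^+ 2 in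
  let n2 := fun w => enorm (nr t w) ^+ 2 in
  let m2 := fun w => enorm (mr t w) ^+ 2 in
  rv_integrable P g_t -> rv_integrable P g_t1 -> rv_integrable P gy2 ->
  rv_integrable P gx2 -> rv_integrable P ey2 -> rv_integrable P ex2 ->
  rv_integrable P n2 -> rv_integrable P m2 ->
  expect P g_t1 >= expect P g_t + beta / 2 * expect P gy2 - alpha / 2 * expect P gx2
               - beta / 2 * expect P ey2 + alpha / 2 * expect P ex2
               + beta / 2 * (1 - lbar * beta) * expect P n2
               - alpha / 2 * (1 + alpha * lbar) * expect P m2.
Proof.
move=> g xr yr mr nr g_t g_t1 gy2 gx2 ey2 ex2 n2 m2 Ig_t Ig_t1 Igy2 Igx2 Iey2 Iex2 In2 Im2.
have pathwise w : g_t w + beta / 2 * gy2 w - alpha / 2 * gx2 w - beta / 2 * ey2 w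
    + alpha / 2 * ex2 w + beta / 2 * (1 - lbar * beta) * n2 w
    - alpha / 2 * (1 + alpha * lbar) * m2 w <= g_t1 w.
  have step_x : xr t.+1 w = xr t w - alpha *: mr t w by exact: X_rvS.
  have step_y : yr t.+1 w = yr t w + beta *: nr t w by exact: Y_rvS.
  rewrite /g_t1 /gy2 /ey2 step_x step_y.
  apply: (gda_step_ge (f := g) (L := lbar)) => [y|x].
  - exact: mean_obj_remainder_x hGint hdx hLx y.
  - exact: mean_obj_remainder_y hGint hdy hLy x.
apply: le_trans (le_expect _ Ig_t1 pathwise); rewrite ?(expectB, expectD, expectZl) //.
all: by repeat first [assumption | apply: rv_integrableB | apply: rv_integrableD
                                 | apply: rv_integrableZl].
Qed.
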